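(* Let $E$ be a closed formula in which all bound variables are pairwise distinct, and let $x$ be a variable bound in $E$. Let $[\Gamma]_{V(x)}$ be a normal item occurring in a derivation of $\vdash E$ in LJB. Then for every item of $\Gamma$ of the form $[\Gamma']_{V(x')}$, the variable $x'$ is in the scope of $x$.
   Context: Formulas: $A ::= P(t_1,\dots,t_n)\mid A\rightarrow A\mid\forall x\,A$, with first-order terms. A formula is a tree with nodes labelled by atomic formulas, $\rightarrow$, or $\forall x$; positions are node addresses ordered by prefix. In $E$ each bound variable $x$ labels a unique position $\forall x$; a variable $y$ is in the scope of $x$ if the position labelled $\forall x$ is a strict prefix of that labelled $\forall y$. $V(x)$ is the set of variables bound in the subformula $\forall x\,A$ of $E$ at position $\forall x$ (equivalently $x$ together with all variables in the scope of $x$). LJB: an LJB-context is a finite multiset of items; an item is a formula or $[\Gamma]_V$ ($V$ a finite set of variables bound by the bracket, $\Gamma$ an LJB-context); $FV([\Gamma]_V)=FV(\Gamma)\setminus V$. Cleaning rules (anywhere in a context): $[I,\Gamma]_V\longrightarrow I,[\Gamma]_V$ if $FV(I)\cap V=\emptyset$; $[\ ]_V\longrightarrow\emptyset$; $I\,I\longrightarrow I$; an item is normal if no cleaning rule applies inside it; $\Gamma{\downarrow}$ is the normal form for a fixed strategy. LJB rules apply only to LJB-sequents with normal context in which, in each formula, bound variables are distinct and distinct from free variables; formulas are not identified modulo $\alpha$. Rules: (L$\rightarrow$) from $\Gamma'\vdash A_1,\dots,\Gamma'\vdash A_n$ infer $\Gamma\vdash P$, where $\Gamma=\Gamma_1,[\Gamma_2,[\dots\Gamma_{i-1},[\Gamma_i,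 A_1\rightarrow\dots\rightarrow A_n\rightarrow P]_{V_{i-1}}\dots]_{V_2}]_{V_1}$ ($i\ge1$), $\Gamma'=([\dots[[\Gamma_1]_{V_1},\Gamma_2]_{V_2},\dots,\Gamma_{i-1}]_{V_{i-1}},\Gamma_i,A_1\rightarrow\dots\rightarrow A_n\rightarrow P){\downarrow}$, $P$ atomic with no free variable in $V_1\cup\dots\cup V_{i-1}$; (R$\forall$) from $[\Gamma]_V{\downarrow}\vdash A$ infer $\Gamma\vdash\forall x\,A$, $V$ the set of all variables bound in $\forall x\,A$; (R$\rightarrow$) from $(\Gamma,A){\downarrow}\vdash B$ infer $\Gamma\vdash A\rightarrow B$. *)

From Stdlib Require Import List Arith Relations.
Import ListNotations.

Inductive term : Type :=
| Var (x : nat)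
| Fn (f : nat) (ts : list term).

Inductive form : Type :=
| Atom (p : nat) (ts : list term)
| Imp (A B : form)
| All (x : nat) (A : form).

Fixpoint fv_term (t : term) : list nat :=
  match t with
  | Var x => [x]
  | Fn _ ts => (fix go (l : list term) : list nat :=
                  match l with [] => [] | u :: l' => fv_term u ++ go l' end) ts
  end.

Definition fv_terms (ts : list term) : list nat := flat_map fv_term ts.

Fixpoint fv_form (A : form) : list nat :=
  match A with
  | Atom _ ts => fv_terms ts
  | Imp A B => fv_form A ++ fv_form B
  | All x A => filter (fun v => negb (Nat.eqb v x)) (fv_form A)
  end.

Fixpoint bv (A : form) : list nat :=
  match A with
  | Atom _ _ => []
  | Imp A B => bv A ++ bv B
  | All x A => x :: bv A
  end.

Definition closed (E : form) : Prop := fv_form E = [].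

Inductive subf : form -> form -> Prop :=
| sf_refl A : subf A A
| sf_impl C A B : subf C A -> subf C (Imp A B)
| sf_impr C A B : subf C B -> subf C (Imp A B)
| sf_all C x A : subf C A -> subf C (All x A).

(** [Vof E x v] : v belongs to V(x), the set of variables bound in the subformula
    [forall x, A] of E at the position labelled [forall x]. *)
Definition Vof (E : form) (x : nat) (v : nat) : Prop :=
  exists A, subf (All x A) E /\ In v (bv (All x A)).

(** y is in the scope of x in E: the position labelled [forall x] is a strict
    prefix of the position labelled [forall y]. *)
Definition in_scope (E : form) (x y : nat) : Prop :=
  exists A, subf (All x A) E /\ In y (bv A).

(** An item is a formula or a bracket [Γ]_V; V is a finite set of variables
    represented by a list (read as a set), Γ a multiset represented by a list
    (read up to permutation, see [ctx_eq]). *)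
Inductive item : Type :=
| IF (A : form)
| IB (V : list nat) (G : list item).

Definition ctx := list item.

Fixpoint fv_item (i : item) : list nat :=
  match i with
  | IF A => fv_form A
  | IB V G => filter (fun v => negb (existsb (Nat.eqb v) V))
               ((fix go (l : list item) : list nat :=
                   match l with [] => [] | j :: l' => fv_item j ++ go l' end) G)
  end.

Inductive item_eq : item -> item -> Prop :=
| ie_form A : item_eq (IF A) (IF A)
| ie_br V V' G G' : (forall v, In v V <-> In v V') -> ctx_eq G G' ->
    item_eq (IB V G) (IB V' G')
with ctx_eq : ctx -> ctx -> Prop :=
| ce_nil : ctx_eq [] []
| ce_skip i i' G G' : item_eq i i' -> ctx_eq G G' -> ctx_eq (i :: G) (i' :: G')
| ce_swap i j G : ctx_eq (i :: j :: G) (j :: i :: G)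
| ce_trans G1 G2 G3 : ctx_eq G1 G2 -> ctx_eq G2 G3 -> ctx_eq G1 G3.

Inductive clean_step : ctx -> ctx -> Prop :=
| cs_extract G1 G2 V I G :
    (forall v, In v (fv_item I) -> ~ In v V) ->
    clean_step (G1 ++ IB V (I :: G) :: G2) (G1 ++ I :: IB V G :: G2)
| cs_empty G1 G2 V : clean_step (G1 ++ IB V [] :: G2) (G1 ++ G2)
| cs_contr G1 G2 I : clean_step (G1 ++ I :: I :: G2) (G1 ++ I :: G2)
| cs_cong G1 G2 V G G' : clean_step G G' ->
    clean_step (G1 ++ IB V G :: G2) (G1 ++ IB V G' :: G2).

Definition clean_star : ctx -> ctx -> Prop :=
  clos_refl_trans ctx (fun a b => clean_step a b \/ ctx_eq a b).

Definition ctx_normal (G : ctx) : Prop :=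
  forall G0 G', ctx_eq G G0 -> ~ clean_step G0 G'.

Definition item_normal (i : item) : Prop := ctx_normal [i].

(** A normalisation strategy: [nf G] is a normal form of G ( = G↓ ). *)
Definition nf_spec (nf : ctx -> ctx) : Prop :=
  forall G, clean_star G (nf G) /\ ctx_normal (nf G).

Inductive item_occ (i : item) : ctx -> Prop :=
| io_here G : In i G -> item_occ i G
| io_deep V G' G : In (IB V G') G -> item_occ i G' -> item_occ i G.

Definition form_occ (A : form) (G : ctx) : Prop := item_occ (IF A) G.

Definition form_ok (A : form) : Prop :=
  NoDup (bv A) /\ forall v, In v (bv A) -> ~ In v (fv_form A).

Definition wf_seq (G : ctx) (C : form) : Prop :=
  ctx_normal G /\ form_ok C /\ forall A, form_occ A G -> form_ok A.

Fixpoint imps (As : list form) (P : form) : form :=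
  match As with [] => P | A :: As' => Imp A (imps As' P) end.

(** frames [(Γ1,V1); ...; (Γ_{i-1},V_{i-1})]:
    nest fs D = Γ1,[Γ2,[ ... Γ_{i-1},[D]_{V_{i-1}} ... ]_{V2}]_{V1} *)
Fixpoint nest (fs : list (ctx * list nat)) (D : ctx) : ctx :=
  match fs with
  | [] => D
  | (G, V) :: fs' => G ++ [IB V (nest fs' D)]
  end.

(** unnest [] fs = [ ... [[Γ1]_{V1}, Γ2]_{V2}, ..., Γ_{i-1}]_{V_{i-1}} (empty if i = 1) *)
Fixpoint unnest (acc : ctx) (fs : list (ctx * list nat)) : ctx :=
  match fs with
  | [] => acc
  | (G, V) :: fs' => unnest [IB V (acc ++ G)] fs'
  end.

Inductive tree : Type := Node (G : ctx) (C : form) (kids : list tree).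

Definition root (t : tree) : ctx * form := let 'Node G C _ := t in (G, C).

Inductive rule_inst (nf : ctx -> ctx) : ctx -> form -> list (ctx * form) -> Prop :=
| r_imp G A B :
    rule_inst nf G (Imp A B) [(nf (G ++ [IF A]), B)]
| r_all G x A :
    rule_inst nf G (All x A) [(nf [IB (bv (All x A)) G], A)]
| r_limp G fs Gi As p ts :
    ctx_eq G (nest fs (Gi ++ [IF (imps As (Atom p ts))])) ->
    (forall v, In v (fv_terms ts) -> forall Gk Vk, In (Gk, Vk) fs -> ~ In v Vk) ->
    rule_inst nf G (Atom p ts)
      (map (fun A => (nf (unnest [] fs ++ Gi ++ [IF (imps As (Atom p ts))]), A)) As).

Inductive valid (nf : ctx -> ctx) : tree -> Prop :=
| v_node G C ks :
    wf_seq G C ->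
    rule_inst nf G C (map root ks) ->
    (forall k, In k ks -> valid nf k) ->
    valid nf (Node G C ks).

Inductive node_in (G : ctx) (C : form) : tree -> Prop :=
| ni_here ks : node_in G C (Node G C ks)
| ni_kid G0 C0 ks k : In k ks -> node_in G C k -> node_in G C (Node G0 C0 ks).

(* Every context in a derivation of [⊢ E] satisfies an invariant: its formulas
   are subformulas of E, each bracket is labelled V(y) for some bound variable y,
   and each item directly inside [_]_V(y) either has no free variable in V(y) or
   has all its free variables outside V(y) bound strictly above y.  Because E is
   closed with distinct bound variables, the free variables of a subformula lie on
   one branch of E, and so do those of a normal bracket (they all enclose its
   label); a set of variables on one branch that meets V(y) can leave V(y) only
   upwards, which is why the rules re-establish the invariant, while cleaning and
   multiset equality only shrink free variables.  In a normal bracket [Γ]_V(x)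
   every item meets V(x), otherwise it could be extracted; so a nested
   [Γ']_V(x') has a free variable in V(x) bound strictly above x', whence x' is
   in the scope of x. *)

From Stdlib Require Import List Arith Classical.
Import ListNotations.

(** * Binders in a formula with distinct bound variables *)

Lemma NoDup_app_disjoint {A : Type} (l1 l2 : list A) a :
  NoDup (l1 ++ l2) -> In a l1 -> In a l2 -> False.
Proof.
  intros Hnd H1 H2. apply in_split in H2 as [m1 [m2 ->]].
  rewrite app_assoc in Hnd. apply NoDup_remove_2 in Hnd.
  apply Hnd, in_app_iff; left; apply in_app_iff; left; exact H1.
Qed.

Lemma subf_trans A B C : subf A B -> subf B C -> subf A C.
Proof. intros HAB HBC; induction HBC; eauto using subf. Qed.

Lemma subf_bv_incl A B : subf A B -> incl (bv A) (bv B).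
Proof. induction 1; simpl; auto using incl_refl, incl_appl, incl_appr, incl_tl. Qed.

Lemma subf_NoDup_bv A B : subf A B -> NoDup (bv B) -> NoDup (bv A).
Proof.
  induction 1; simpl; intros Hnd; auto.
  - apply IHsubf; eapply NoDup_app_remove_r; eauto.
  - apply IHsubf; eapply NoDup_app_remove_l; eauto.
  - apply IHsubf; inversion Hnd; auto.
Qed.

Lemma bv_binder E v : In v (bv E) -> exists A, subf (All v A) E.
Proof.
  induction E as [p ts|E1 IH1 E2 IH2|x E IH]; simpl; intros Hv.
  - contradiction.
  - apply in_app_iff in Hv as [Hv|Hv];
      [destruct (IH1 Hv) as [A HA]|destruct (IH2 Hv) as [A HA]]; exists A; auto using subf.
  - destruct Hv as [<-|Hv]; [exists E; constructor|].
    destruct (IH Hv) as [A HA]; exists A; auto using subf.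
Qed.

Lemma subf_bv_overlap E X Y c : NoDup (bv E) -> subf X E -> subf Y E ->
  In c (bv X) -> In c (bv Y) -> subf X Y \/ subf Y X.
Proof.
  revert X Y; induction E as [p ts|E1 IH1 E2 IH2|z E IH]; simpl;
    intros X Y Hnd HX HY HcX HcY.
  - inversion HX; subst; contradiction.
  - inversion HX as [|? ? ? HX'|? ? ? HX'|]; subst; [right; exact HY| |];
      inversion HY as [|? ? ? HY'|? ? ? HY'|]; subst; try (left; exact HX).
    + eapply IH1; eauto using NoDup_app_remove_r.
    + exfalso; apply (NoDup_app_disjoint _ _ c Hnd); eapply subf_bv_incl; eauto.
    + exfalso; apply (NoDup_app_disjoint _ _ c Hnd); eapply subf_bv_incl; eauto.
    + eapply IH2; eauto using NoDup_app_remove_l.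
  - inversion HX as [|? ? ? HX'|? ? ? HX'|? ? ? HX']; subst; [right; exact HY|];
      inversion HY as [|? ? ? HY'|? ? ? HY'|? ? ? HY']; subst; [left; exact HX|].
    inversion Hnd; eapply IH; eauto.
Qed.

Lemma binder_body_unique E z A B :
  NoDup (bv E) -> subf (All z A) E -> subf (All z B) E -> A = B.
Proof.
  intros Hnd HA HB.
  assert (Hnested : forall A B, subf (All z B) E -> subf (All z A) (All z B) -> A = B).
  { intros A' B' HB' H. inversion H as [|? ? ? H'|? ? ? H'|? ? ? H']; subst; auto.
    exfalso. apply (subf_NoDup_bv _ _ HB') in Hnd. inversion Hnd as [|? ? Hz].
    apply Hz, (subf_bv_incl _ _ H'); left; reflexivity. }
  destruct (subf_bv_overlap E _ _ z Hnd HA HB (or_introl eq_refl) (or_introl eq_refl))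
    as [H|H]; [|symmetry]; eauto.
Qed.

Lemma binders_nested E v w A B c : NoDup (bv E) -> subf (All v A) E -> subf (All w B) E ->
  In c (bv A) -> In c (bv B) -> v = w \/ In v (bv B) \/ In w (bv A).
Proof.
  intros Hnd HA HB HcA HcB.
  destruct (subf_bv_overlap E _ _ c Hnd HA HB (or_intror HcA) (or_intror HcB)) as [H|H];
    inversion H; subst; auto; right; [left|right]; eapply subf_bv_incl; eauto; left; auto.
Qed.

Lemma fv_captured Z E v : subf Z E -> In v (fv_form Z) ->
  In v (fv_form E) \/ exists B, subf (All v B) E /\ subf Z B.
Proof.
  induction 1 as [|Z A B HZ IH|Z A B HZ IH|Z x A HZ IH]; intros Hv; auto;
    destruct (IH Hv) as [Hf|[B' [HB' HZB']]]; simpl;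
    try (right; exists B'; auto using subf; fail).
  - left; apply in_app_iff; auto.
  - left; apply in_app_iff; auto.
  - destruct (Nat.eq_dec v x) as [->|Hne]; [right; exists A; auto using subf|].
    left; apply filter_In; split; auto; apply Bool.negb_true_iff, Nat.eqb_neq; auto.
Qed.

(** * Free variables and normal contexts *)

Lemma in_fv_bracket v V G :
  In v (fv_item (IB V G)) <-> (exists J, In J G /\ In v (fv_item J)) /\ ~ In v V.
Proof.
  assert (Hfv : fv_item (IB V G)
                = filter (fun v => negb (existsb (Nat.eqb v) V)) (flat_map fv_item G)).
  { simpl; f_equal; induction G; simpl; congruence. }
  rewrite Hfv, filter_In, in_flat_map, Bool.negb_true_iff.
  assert (Hex : existsb (Nat.eqb v) V = true <-> In v V).
  { rewrite existsb_exists; split.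
    - intros [u [Hu Heq]]; apply Nat.eqb_eq in Heq; subst; exact Hu.
    - intros Hv; exists v; split; auto; apply Nat.eqb_refl. }
  destruct (existsb (Nat.eqb v) V); intuition congruence.
Qed.

Definition fv_covered (G G' : ctx) :=
  forall J', In J' G' -> exists J, In J G /\ incl (fv_item J') (fv_item J).

Lemma fv_covered_refl G : fv_covered G G.
Proof. intros J HJ; exists J; split; auto using incl_refl. Qed.

Lemma fv_covered_incl G G' : incl G' G -> fv_covered G G'.
Proof. intros Hi J HJ; exists J; split; auto using incl_refl. Qed.

Lemma fv_covered_trans G1 G2 G3 : fv_covered G1 G2 -> fv_covered G2 G3 -> fv_covered G1 G3.
Proof.
  intros H12 H23 J HJ. destruct (H23 J HJ) as [K [HK HJK]].
  destruct (H12 K HK) as [L [HL HKL]]. exists L; split; eauto using incl_tran.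
Qed.

Lemma fv_covered_cons i i' G G' :
  incl (fv_item i') (fv_item i) -> fv_covered G G' -> fv_covered (i :: G) (i' :: G').
Proof.
  intros Hi HG J [<-|HJ]; [exists i; split; auto; left; reflexivity|].
  destruct (HG J HJ) as [K [HK HJK]]; exists K; split; auto; right; exact HK.
Qed.

Lemma fv_covered_replace G1 Xs Ys G2 :
  fv_covered Xs Ys -> fv_covered (G1 ++ Xs ++ G2) (G1 ++ Ys ++ G2).
Proof.
  intros HXY J. rewrite !in_app_iff. intros [HJ|[HJ|HJ]].
  - exists J; split; auto using incl_refl; apply in_app_iff; auto.
  - destruct (HXY J HJ) as [K [HK HJK]]; exists K; split; auto.
    apply in_app_iff; right; apply in_app_iff; auto.
  - exists J; split; auto using incl_refl; apply in_app_iff; right; apply in_app_iff; auto.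
Qed.

Lemma fv_bracket_incl V V' G G' :
  incl V V' -> fv_covered G G' -> incl (fv_item (IB V' G')) (fv_item (IB V G)).
Proof.
  intros HV HG v Hv. apply in_fv_bracket in Hv as [[K' [HK' Hv]] HvV'].
  destruct (HG K' HK') as [K [HK HKK']].
  apply in_fv_bracket; split; eauto.
Qed.

Lemma clean_step_fv_covered G G' : clean_step G G' -> fv_covered G G'.
Proof.
  induction 1 as [G1 G2 V I G Hd|G1 G2 V|G1 G2 I|G1 G2 V G G' _ IH].
  - apply (fv_covered_replace G1 [IB V (I :: G)] [I; IB V G] G2).
    intros J [<-|[<-|[]]]; exists (IB V (I :: G)); split; try (left; reflexivity).
    + intros v Hv; apply in_fv_bracket; split; [exists I; split; [left|]|apply Hd]; auto.
    + apply fv_bracket_incl; auto using incl_refl.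
      apply fv_covered_incl, incl_tl, incl_refl.
  - apply (fv_covered_replace G1 [IB V []] [] G2); intros J [].
  - apply (fv_covered_replace G1 [I; I] [I] G2), fv_covered_incl.
    intros J [<-|[]]; left; reflexivity.
  - apply (fv_covered_replace G1 [IB V G] [IB V G'] G2).
    apply fv_covered_cons; auto using fv_bracket_incl, incl_refl, fv_covered_refl.
Qed.

Scheme item_eq_mind := Induction for item_eq Sort Prop
  with ctx_eq_mind := Induction for ctx_eq Sort Prop.
Combined Scheme item_ctx_eq_mind from item_eq_mind, ctx_eq_mind.

Lemma eq_fv_covered :
  (forall i i', item_eq i i' -> incl (fv_item i') (fv_item i)) /\
  (forall G G', ctx_eq G G' -> fv_covered G G').
Proof.
  apply item_ctx_eq_mind.
  - intros A; apply incl_refl.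
  - intros V V' G G' HV _ HG. apply fv_bracket_incl; auto.
    intros v; apply HV.
  - apply fv_covered_refl.
  - intros; apply fv_covered_cons; auto.
  - intros i j G. apply fv_covered_incl. intros J; simpl; tauto.
  - intros; eapply fv_covered_trans; eauto.
Qed.

Fixpoint item_eq_refl (i : item) : item_eq i i :=
  match i with
  | IF A => ie_form A
  | IB V G => ie_br V V G G (fun v => iff_refl (In v V))
      ((fix ctx_refl (l : ctx) : ctx_eq l l :=
          match l with
          | [] => ce_nil
          | j :: l' => ce_skip j j l' l' (item_eq_refl j) (ctx_refl l')
          end) G)
  end.

Lemma ctx_eq_refl G : ctx_eq G G.
Proof. induction G; constructor; auto using item_eq_refl. Qed.

Lemma ctx_eq_app_l l G G' : ctx_eq G G' -> ctx_eq (l ++ G) (l ++ G').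
Proof. induction l; simpl; auto using ce_skip, item_eq_refl. Qed.

Lemma ctx_eq_move_front l1 i l2 : ctx_eq (l1 ++ i :: l2) (i :: l1 ++ l2).
Proof.
  induction l1 as [|j l1 IH]; simpl; [apply ctx_eq_refl|].
  eapply ce_trans; [apply ce_skip; [apply item_eq_refl|exact IH]|apply ce_swap].
Qed.

Lemma ctx_normal_eq G G' : ctx_eq G G' -> ctx_normal G -> ctx_normal G'.
Proof. intros He Hn G0 G'' He'; apply Hn; eapply ce_trans; eauto. Qed.

Lemma normal_bracket_body N W D : ctx_normal N -> In (IB W D) N -> ctx_normal D.
Proof.
  intros Hn HB D0 D' He Hs. apply in_split in HB as [l1 [l2 ->]].
  apply (Hn (l1 ++ IB W D0 :: l2) (l1 ++ IB W D' :: l2)).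
  - apply ctx_eq_app_l, ce_skip; [apply ie_br; [reflexivity|exact He]|apply ctx_eq_refl].
  - apply cs_cong; exact Hs.
Qed.

Lemma normal_bracket_meets_label N W D K : ctx_normal N -> In (IB W D) N -> In K D ->
  exists v, In v (fv_item K) /\ In v W.
Proof.
  intros Hn HB HK. apply NNPP; intros Hno.
  apply in_split in HB as [l1 [l2 ->]]. apply in_split in HK as [m1 [m2 ->]].
  apply (Hn (l1 ++ IB W (K :: m1 ++ m2) :: l2) (l1 ++ K :: IB W (m1 ++ m2) :: l2)).
  - apply ctx_eq_app_l, ce_skip; [|apply ctx_eq_refl].
    apply ie_br; [reflexivity|apply ctx_eq_move_front].
  - apply cs_extract. intros v Hv HvW; apply Hno; eauto.
Qed.

Section Invariant.

Variable E : form.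
Hypothesis E_closed : closed E.
Hypothesis E_nodup : NoDup (bv E).

(** * The scope order *)

Lemma closed_fv_binder Z v : subf Z E -> In v (fv_form Z) ->
  exists B, subf (All v B) E /\ subf Z B.
Proof.
  intros HZ Hv. destruct (fv_captured Z E v HZ Hv) as [Hf|]; auto.
  unfold closed in E_closed; rewrite E_closed in Hf; contradiction.
Qed.

Definition comparable a b := a = b \/ in_scope E a b \/ in_scope E b a.

Definition chain (S : list nat) := forall a b, In a S -> In b S -> comparable a b.

Lemma subf_fv_chain F : subf F E -> chain (fv_form F).
Proof.
  intros HF v w Hv Hw.
  destruct (closed_fv_binder F w HF Hw) as [B [HB HFB]].
  destruct (fv_captured F (All w B) v (sf_all _ _ _ HFB) Hv) as [Hf|[B' [HB' _]]].
  - destruct (closed_fv_binder _ v HB Hf) as [B' [HB' HwB']].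
    right; left; exists B'; split; auto.
    apply (subf_bv_incl _ _ HwB'); left; reflexivity.
  - inversion HB' as [|? ? ? H|? ? ? H|? ? ? H]; subst; [left; reflexivity|].
    right; right; exists B; split; auto.
    apply (subf_bv_incl _ _ H); left; reflexivity.
Qed.

Lemma in_scope_trans a b c : in_scope E a b -> in_scope E b c -> in_scope E a c.
Proof.
  intros [A [HA Hb]] [B [HB Hc]].
  destruct (bv_binder A b Hb) as [B' HB'].
  assert (B' = B) as ->.
  { apply (binder_body_unique E b); auto. eapply subf_trans; [exact HB'|].
    eapply subf_trans; [|exact HA]. apply sf_all, sf_refl. }
  exists A; split; auto. apply (subf_bv_incl _ _ HB'); right; exact Hc.
Qed.

Lemma in_scope_common_comparable a b c :
  in_scope E a c -> in_scope E b c -> comparable a b.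
Proof.
  intros [A [HA Ha]] [B [HB Hb]].
  destruct (binders_nested E a b A B c E_nodup HA HB Ha Hb) as [->|[H|H]].
  - left; reflexivity.
  - right; right; exists B; auto.
  - right; left; exists A; auto.
Qed.

Definition is_label (W : list nat) y := forall v, In v W <-> v = y \/ in_scope E y v.

Lemma is_label_eq W W' y : (forall v, In v W <-> In v W') -> is_label W y -> is_label W' y.
Proof. intros HW Hl v; rewrite <- HW; apply Hl. Qed.

Lemma binder_is_label x A : subf (All x A) E -> is_label (bv (All x A)) x.
Proof.
  intros HA v; simpl; split.
  - intros [<-|Hv]; [left; reflexivity|right; exists A; auto].
  - intros [<-|[A' [HA' Hv]]]; [left; reflexivity|right].
    rewrite (binder_body_unique E x A A'); auto.
Qed.

Lemma Vof_is_label x V : In x (bv E) -> (forall v, In v V <-> Vof E x v) -> is_label V x.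
Proof.
  intros Hx HV v; rewrite HV; split.
  - intros [A [HA [<-|Hv]]]; [left; reflexivity|right; exists A; auto].
  - intros [->|[A [HA Hv]]].
    + destruct (bv_binder E x Hx) as [A HA]; exists A; split; auto; left; reflexivity.
    + exists A; split; auto; right; exact Hv.
Qed.

Definition fv_fit (W : list nat) y (S : list nat) :=
  (forall v, In v S -> ~ In v W) \/ (forall v, In v S -> ~ In v W -> in_scope E v y).

Lemma fv_fit_incl W y S S' : incl S' S -> fv_fit W y S -> fv_fit W y S'.
Proof. intros Hi [H|H]; [left|right]; intros; apply H; auto. Qed.

Lemma fv_fit_eq W W' y S : (forall v, In v W <-> In v W') -> fv_fit W y S -> fv_fit W' y S.
Proof.
  intros HW [H|H]; [left|right]; intros v Hv Hn; [apply (H v Hv)|apply H]; auto;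
    rewrite HW; auto.
Qed.

(* A chain meeting V(y) can leave V(y) only through binders enclosing y. *)
Lemma chain_fv_fit S W y : chain S -> is_label W y -> fv_fit W y S.
Proof.
  intros Hch Hl.
  destruct (classic (exists w, In w S /\ In w W)) as [[w [HwS HwW]]|Hno].
  - right. intros v HvS HvW.
    assert (Hv : ~ (v = y \/ in_scope E y v)) by (intro H; apply HvW, Hl, H).
    apply Hl in HwW.
    destruct (Hch v w HvS HwS) as [->|[Hvw|Hwv]]; [tauto| |].
    + destruct HwW as [->|Hyw]; auto.
      destruct (in_scope_common_comparable v y w Hvw Hyw) as [->|[H|H]]; tauto.
    + destruct HwW as [->|Hyw]; [tauto|].
      exfalso; apply Hv; right; eapply in_scope_trans; eauto.
  - left. intros v HvS HvW; apply Hno; eauto.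
Qed.

(** * The labelling invariant *)

Inductive item_ok : item -> Prop :=
| ok_form A : subf A E -> item_ok (IF A)
| ok_bracket W G y : is_label W y ->
    (forall J, In J G -> item_ok J /\ fv_fit W y (fv_item J)) -> item_ok (IB W G).

Definition ctx_ok (G : ctx) := forall J, In J G -> item_ok J.

Lemma bracket_ok_body W G : item_ok (IB W G) -> ctx_ok G.
Proof. inversion 1 as [|? ? ? _ HG]; intros J HJ; apply HG, HJ. Qed.

Lemma ctx_ok_incl G G' : incl G' G -> ctx_ok G -> ctx_ok G'.
Proof. intros Hi HG J HJ; auto. Qed.

Lemma ctx_ok_replace G1 Xs Ys G2 :
  ctx_ok (G1 ++ Xs ++ G2) -> ctx_ok Ys -> ctx_ok (G1 ++ Ys ++ G2).
Proof.
  intros HX HY J. rewrite !in_app_iff. intros [HJ|[HJ|HJ]]; auto;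
    apply HX; rewrite !in_app_iff; auto.
Qed.

Lemma bracket_ok_covered V V' G G' : (forall v, In v V <-> In v V') ->
  item_ok (IB V G) -> ctx_ok G' -> fv_covered G G' -> item_ok (IB V' G').
Proof.
  intros HV HB HG' Hcov. inversion HB as [|? ? y Hl HG]; subst.
  apply ok_bracket with y; [eapply is_label_eq; eauto|].
  intros K' HK'; split; auto.
  destruct (Hcov K' HK') as [K [HK HKK']].
  eapply fv_fit_eq; eauto. eapply fv_fit_incl; eauto. apply HG, HK.
Qed.

Lemma clean_step_ok G G' : clean_step G G' -> ctx_ok G -> ctx_ok G'.
Proof.
  induction 1 as [G1 G2 V I G Hd|G1 G2 V|G1 G2 I|G1 G2 V G G' Hs IH]; intros HN.
  - assert (HB : item_ok (IB V (I :: G))) by (apply HN, in_app_iff; right; left; auto).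
    inversion HB as [|? ? y Hl HG]; subst.
    apply (ctx_ok_replace G1 [IB V (I :: G)] [I; IB V G] G2); auto.
    intros J [<-|[<-|[]]]; [apply HG; left; reflexivity|].
    apply ok_bracket with y; auto. intros K HK; apply HG; right; exact HK.
  - apply (ctx_ok_incl (G1 ++ IB V [] :: G2)); auto.
    intros J; rewrite !in_app_iff; simpl; tauto.
  - apply (ctx_ok_incl (G1 ++ I :: I :: G2)); auto.
    intros J; rewrite !in_app_iff; simpl; tauto.
  - assert (HB : item_ok (IB V G)) by (apply HN, in_app_iff; right; left; auto).
    apply (ctx_ok_replace G1 [IB V G] [IB V G'] G2); auto.
    intros J [<-|[]]. apply bracket_ok_covered with V G; try reflexivity; auto.
    + apply IH, (bracket_ok_body V), HB.
    + apply clean_step_fv_covered, Hs.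
Qed.

Lemma eq_ok :
  (forall i i', item_eq i i' -> item_ok i -> item_ok i') /\
  (forall G G', ctx_eq G G' -> ctx_ok G -> ctx_ok G').
Proof.
  apply item_ctx_eq_mind.
  - auto.
  - intros V V' G G' HV HGG' IH HB.
    apply bracket_ok_covered with V G; auto.
    + apply IH, (bracket_ok_body V), HB.
    + apply (proj2 eq_fv_covered), HGG'.
  - auto.
  - intros i i' G G' _ IHi _ IHG HN J [<-|HJ].
    + apply IHi, HN; left; reflexivity.
    + apply IHG; auto. intros K HK; apply HN; right; exact HK.
  - intros i j G. apply ctx_ok_incl. intros J; simpl; tauto.
  - auto.
Qed.

Lemma clean_star_ok G G' : clean_star G G' -> ctx_ok G -> ctx_ok G'.
Proof.
  induction 1 as [G G' [Hs|He]| |]; auto.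
  - apply clean_step_ok, Hs.
  - apply (proj2 eq_ok), He.
Qed.

Lemma item_occ_ok i G : item_occ i G -> ctx_ok G -> item_ok i.
Proof.
  induction 1 as [G HG|V G' G HB _ IH]; intros HN; auto.
  apply IH, (bracket_ok_body V), HN, HB.
Qed.

Lemma normal_bracket_fv_above N W D y : ctx_normal N -> In (IB W D) N ->
  (forall J, In J D -> fv_fit W y (fv_item J)) ->
  forall v, In v (fv_item (IB W D)) -> in_scope E v y.
Proof.
  intros Hn HB Hfit v Hv. apply in_fv_bracket in Hv as [[K [HK Hv]] HvW].
  destruct (Hfit K HK) as [Hmiss|Habove]; auto.
  destruct (normal_bracket_meets_label N W D K Hn HB HK) as [u [HuK HuW]].
  destruct (Hmiss u HuK HuW).
Qed.

Lemma normal_ok_fv_chain N J : ctx_normal N -> In J N -> item_ok J -> chain (fv_item J).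
Proof.
  intros Hn HJ HJok. inversion HJok as [A HA|W D y Hl HD]; subst.
  - apply subf_fv_chain, HA.
  - intros a b Ha Hb. apply (in_scope_common_comparable a b y);
      eapply normal_bracket_fv_above; eauto; intros K HK; apply HD, HK.
Qed.

Lemma normal_ctx_fv_fit G W y : ctx_normal G -> ctx_ok G -> is_label W y ->
  forall J, In J G -> item_ok J /\ fv_fit W y (fv_item J).
Proof.
  intros Hn HG Hl J HJ; split; auto.
  apply chain_fv_fit; auto. eapply normal_ok_fv_chain; eauto.
Qed.

Lemma nested_bracket_below N V1 D1 y1 V2 D2 : ctx_normal N -> In (IB V1 D1) N ->
  is_label V1 y1 -> In (IB V2 D2) D1 -> item_ok (IB V2 D2) ->
  exists y2, is_label V2 y2 /\ in_scope E y1 y2.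
Proof.
  intros Hn HB1 Hl1 HB2 Hok2. inversion Hok2 as [|? ? y2 Hl2 HD2]; subst.
  exists y2; split; auto.
  destruct (normal_bracket_meets_label N V1 D1 _ Hn HB1 HB2) as [v [Hv2 Hv1]].
  assert (Hvy2 : in_scope E v y2).
  { apply (normal_bracket_fv_above D1 V2 D2); auto.
    - eapply normal_bracket_body; eauto.
    - intros K HK; apply HD2, HK. }
  apply Hl1 in Hv1 as [->|Hy1v]; eauto using in_scope_trans.
Qed.

Lemma nested_bracket_label_incl N V1 D1 y1 V2 D2 : ctx_normal N -> In (IB V1 D1) N ->
  is_label V1 y1 -> In (IB V2 D2) D1 -> item_ok (IB V2 D2) -> incl V2 V1.
Proof.
  intros Hn HB1 Hl1 HB2 Hok2 v Hv.
  destruct (nested_bracket_below N V1 D1 y1 V2 D2) as [y2 [Hl2 Hy12]]; auto.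
  apply Hl1; right. destruct (proj1 (Hl2 v) Hv) as [->|Hy2v]; eauto using in_scope_trans.
Qed.

Lemma nest_ok_inner fs D : ctx_ok (nest fs D) -> ctx_ok D.
Proof.
  induction fs as [|[G V] fs IH]; simpl; auto. intros HN.
  apply IH, (bracket_ok_body V), HN, in_app_iff; right; left; reflexivity.
Qed.

Lemma nest_labels_incl fs D : forall N V1, ctx_normal N -> ctx_ok N ->
  In (IB V1 (nest fs D)) N -> forall Gk Vk, In (Gk, Vk) fs -> incl Vk V1.
Proof.
  induction fs as [|[G2 V2] fs IH]; intros N V1 Hn HN HB1 Gk Vk Hk; [contradiction|].
  simpl in HB1. pose proof (HN _ HB1) as Hok1.
  inversion Hok1 as [|? ? y1 Hl1 HD1]; subst.
  assert (HB2 : In (IB V2 (nest fs D)) (G2 ++ [IB V2 (nest fs D)]))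
    by (apply in_app_iff; right; left; reflexivity).
  assert (Hincl : incl V2 V1)
    by (eapply nested_bracket_label_incl; eauto; apply HD1, HB2).
  destruct Hk as [Heq|Hk]; [injection Heq as <- <-; exact Hincl|].
  apply incl_tran with V2; auto.
  apply (IH (G2 ++ [IB V2 (nest fs D)]) V2) with Gk; auto.
  - eapply normal_bracket_body; eauto.
  - eapply bracket_ok_body; eauto.
Qed.

Lemma unnest_ok fs : forall acc D, ctx_normal (nest fs D) -> ctx_ok (nest fs D) -> ctx_ok acc ->
  (forall v, In v (flat_map fv_item acc) -> forall Gk Vk, In (Gk, Vk) fs -> ~ In v Vk) ->
  ctx_ok (unnest acc fs).
Proof.
  induction fs as [|[G1 V1] fs IH]; intros acc D Hn HN Hacc Hfv; simpl; auto.
  simpl in Hn, HN.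
  assert (HB1 : In (IB V1 (nest fs D)) (G1 ++ [IB V1 (nest fs D)]))
    by (apply in_app_iff; right; left; reflexivity).
  pose proof (HN _ HB1) as Hok1. inversion Hok1 as [|? ? y1 Hl1 HD1]; subst.
  apply IH with D.
  - eapply normal_bracket_body; eauto.
  - eapply bracket_ok_body; eauto.
  - intros J [<-|[]]. apply ok_bracket with y1; auto.
    intros K HK; apply in_app_iff in HK as [HK|HK].
    + split; auto. left. intros v Hv.
      apply (Hfv v) with G1; [apply in_flat_map; eauto|left; reflexivity].
    + apply (normal_ctx_fv_fit (G1 ++ [IB V1 (nest fs D)])); auto.
      apply in_app_iff; left; exact HK.
  - intros v Hv Gk Vk Hk HvVk. simpl in Hv; rewrite app_nil_r in Hv.
    apply in_fv_bracket in Hv as [_ HvV1]. apply HvV1.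
    eapply (nest_labels_incl fs D (G1 ++ [IB V1 (nest fs D)])); eauto.
Qed.

Lemma imps_premise_subf As P A : In A As -> subf A (imps As P).
Proof.
  induction As as [|B As IH]; simpl; [contradiction|].
  intros [<-|HA]; auto using subf.
Qed.

Lemma imp_premise_ok nf G A : nf_spec nf -> ctx_ok G -> subf A E ->
  ctx_ok (nf (G ++ [IF A])).
Proof.
  intros Hnf HG HA. apply clean_star_ok with (G ++ [IF A]); [apply Hnf|].
  intros J; rewrite in_app_iff; intros [HJ|[<-|[]]]; auto using ok_form.
Qed.

Lemma all_premise_ok nf G x A : nf_spec nf -> ctx_normal G -> ctx_ok G ->
  subf (All x A) E -> ctx_ok (nf [IB (bv (All x A)) G]).
Proof.
  intros Hnf Hn HG HA. apply clean_star_ok with [IB (bv (All x A)) G]; [apply Hnf|].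
  intros J [<-|[]]. apply ok_bracket with x; [apply binder_is_label, HA|].
  apply normal_ctx_fv_fit; auto. apply binder_is_label, HA.
Qed.

Lemma left_imp_premise_ok nf G fs Gi F : nf_spec nf -> ctx_normal G -> ctx_ok G ->
  ctx_eq G (nest fs (Gi ++ [IF F])) -> ctx_ok (nf (unnest [] fs ++ Gi ++ [IF F])).
Proof.
  intros Hnf Hn HG Heq.
  assert (HN : ctx_ok (nest fs (Gi ++ [IF F]))) by exact (proj2 eq_ok _ _ Heq HG).
  apply clean_star_ok with (unnest [] fs ++ Gi ++ [IF F]); [apply Hnf|].
  intros J; rewrite in_app_iff; intros [HJ|HJ]; [|exact (nest_ok_inner fs _ HN J HJ)].
  revert J HJ. apply unnest_ok with (Gi ++ [IF F]); auto.
  - eapply ctx_normal_eq; eauto.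
  - intros J [].
Qed.

Lemma rule_premise_ok nf G C prems : nf_spec nf -> ctx_normal G -> ctx_ok G -> subf C E ->
  rule_inst nf G C prems -> forall G' C', In (G', C') prems -> subf C' E /\ ctx_ok G'.
Proof.
  intros Hnf Hn HG HC Hr G' C' Hin.
  destruct Hr as [G A B|G x A|G fs Gi As p ts Heq _].
  - destruct Hin as [Hin|[]]; injection Hin as <- <-.
    assert (HA : subf A E) by (eapply subf_trans; [|exact HC]; auto using subf).
    assert (HB : subf B E) by (eapply subf_trans; [|exact HC]; auto using subf).
    split; auto using imp_premise_ok.
  - destruct Hin as [Hin|[]]; injection Hin as <- <-.
    split; [eapply subf_trans; [|exact HC]; auto using subf|apply all_premise_ok; auto].
  - apply in_map_iff in Hin as [A [HA HAs]]; injection HA as <- <-.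
    split; [|apply left_imp_premise_ok with G; auto].
    assert (Hok : item_ok (IF (imps As (Atom p ts)))).
    { refine (nest_ok_inner fs _ (proj2 eq_ok _ _ Heq HG) _ _).
      apply in_app_iff; right; left; reflexivity. }
    inversion Hok as [F HF|]; subst.
    eapply subf_trans; [apply imps_premise_subf, HAs|exact HF].
Qed.

Lemma valid_ok nf t : nf_spec nf -> valid nf t ->
  forall G C, root t = (G, C) -> subf C E -> ctx_ok G ->
  forall G0 C0, node_in G0 C0 t -> ctx_ok G0.
Proof.
  intros Hnf Hv. induction Hv as [G C ks [Hn _] Hr _ IH].
  intros G' C' Hroot HC HG G0 C0 Hni. injection Hroot as <- <-.
  inversion Hni as [|? ? ? k Hk Hnik]; subst; auto.
  destruct k as [Gk Ck ksk].
  destruct (rule_premise_ok nf G C (map root ks) Hnf Hn HG HC Hr Gk Ck) as [HCk HGk].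
  { change (Gk, Ck) with (root (Node Gk Ck ksk)); apply in_map, Hk. }
  eapply IH; eauto; reflexivity.
Qed.

End Invariant.

Theorem proposition12 :
  forall (nf : ctx -> ctx), nf_spec nf ->
  forall (E : form), closed E -> NoDup (bv E) ->
  forall (x : nat), In x (bv E) ->
  forall (t : tree), valid nf t -> root t = (nil, E) ->
  forall (G0 : ctx) (C : form) (V : list nat) (G : ctx),
    node_in G0 C t -> item_occ (IB V G) G0 -> item_normal (IB V G) ->
    (forall v, In v V <-> Vof E x v) ->
  forall (V' : list nat) (G' : ctx) (x' : nat),
    In (IB V' G') G -> In x' (bv E) -> (forall v, In v V' <-> Vof E x' v) ->
    in_scope E x x'.
Proof.
  intros nf Hnf E Hcl Hnd x Hx t Hv Hroot G0 C V G Hni Hocc Hnorm HV V' G' x' HIn Hx' HV'.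
  assert (HG0 : ctx_ok E G0).
  { eapply valid_ok; eauto using sf_refl. intros J []. }
  assert (HVG : item_ok E (IB V G)) by (eapply item_occ_ok; eauto).
  destruct (nested_bracket_below E Hnd [IB V G] V G x V' G') as [y' [Hy' Hxy']].
  - exact Hnorm.
  - left; reflexivity.
  - apply Vof_is_label; auto.
  - exact HIn.
  - apply (bracket_ok_body E V G HVG), HIn.
  - assert (Hx'y' : x' = y' \/ in_scope E y' x').
    { apply Hy', (Vof_is_label E x' V'); auto. }
    destruct Hx'y' as [->|Hy'x']; eauto using in_scope_trans.
Qed.
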